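(* Let $n,d\ge1$, $p\ge d$, $\Delta\in\mathbb{R}^{nd\times nd}$, $\delta>0$, $Z^{\top}=[I_d,\dots,I_d]\in\mathbb{R}^{d\times nd}$, and let $S\in\mathbb{R}^{nd\times p}$ have blocks $S_i$ with $S_iS_i^{\top}=I_d$. If $d_F(S,Z)\le\delta\sqrt{d/n}\,\|\Delta\|_{\mathrm{op}}$, then \[ n\ge\sigma_{\max}(Z^{\top}S)\ge\sigma_{\min}(Z^{\top}S)\ge n-\frac{\delta^2d\|\Delta\|_{\mathrm{op}}^2}{2n}. \]
   Context: $Z^{\top}S=\sum_jS_j\in\mathbb{R}^{d\times p}$; $\sigma_{\max},\sigma_{\min}$ denote its largest and $d$-th (smallest of the $d$) singular values. $d_F(S,Z)=\min\{(\sum_i\|S_i-Q\|_F^2)^{1/2}:Q\in\mathbb{R}^{d\times p},QQ^{\top}=I_d\}$. *)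

From mathcomp Require Import all_boot all_order all_algebra.
From mathcomp Require Import all_classical all_reals.
Set Implicit Arguments. Unset Strict Implicit. Unset Printing Implicit Defensive.
Import Order.TTheory GRing.Theory Num.Theory.
Local Open Scope ring_scope.
Local Open Scope classical_set_scope.

Section Defs.
Variable R : realType.

(* The largest singular value is the
   square root of the largest eigenvalue; the d-th (smallest of the d) is the
   square root of the smallest eigenvalue. *)
Definition sq_singvals {d p : nat} (M : 'M[R]_(d, p)) : set R :=
  [set l | eigenvalue (M *m M^T) l].

Definition sigma_max {d p : nat} (M : 'M[R]_(d, p)) : R :=
  Num.sqrt (sup (sq_singvals M)).

Definition sigma_min {d p : nat} (M : 'M[R]_(d, p)) : R :=
  Num.sqrt (inf (sq_singvals M)).

Definition opnorm {m k : nat} (A : 'M[R]_(m, k)) : R := sigma_max A.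

Definition frob2 {m k : nat} (A : 'M[R]_(m, k)) : R :=
  \sum_(i < m) \sum_(j < k) A i j ^+ 2.

(* i-th d x p block of S in R^{nd x p}: rows i*d, ..., i*d + d - 1 *)
Definition blk {n d p : nat} (S : 'M[R]_(n * d, p)) (i : 'I_n) : 'M[R]_(d, p) :=
  \matrix_(a < d, b < p) S (mxvec_index i a) b.

(* Z in R^{nd x d} with Z^T = [I_d, ..., I_d] *)
Definition Zmat (n d : nat) : 'M[R]_(n * d, d) :=
  \matrix_(k < n * d, b < d) ((k %% d)%N == b)%:R.

Definition dF {n d p : nat} (S : 'M[R]_(n * d, p)) : R :=
  inf [set x | exists Q : 'M[R]_(d, p), Q *m Q^T = 1%:M /\
                 x = Num.sqrt (\sum_(i < n) frob2 (blk S i - Q))].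
End Defs.

From mathcomp Require Import all_boot all_order all_algebra.
From mathcomp Require Import all_classical all_reals.
From mathcomp Require Import complex.
From mathcomp Require Import ring lra.
Import Order.TTheory GRing.Theory Num.Theory.
Set Implicit Arguments. Unset Strict Implicit. Unset Printing Implicit Defensive.
Local Open Scope ring_scope.
Local Open Scope classical_set_scope.

(* Z^T S is the sum M of the blocks S_i.  If v is an eigenvector of M M^T for
   the eigenvalue l, then |vM|^2 = l |v|^2, while |v S_i| = |v Q| = |v| for
   every block and every Q with Q Q^T = I.  Cauchy-Schwarz over the n blocks
   gives l <= n^2.  For the lower bound, polarisation gives
   <v S_i, v Q> = |v|^2 - |v (S_i - Q)|^2 / 2 >= |v|^2 (1 - |S_i - Q|_F^2 / 2),
   so summing over i and applying Cauchy-Schwarz to <v M, v Q> yields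
   sqrt l >= n - sum_i |S_i - Q|_F^2 / 2 for every admissible Q, hence
   sigma_min >= n - d_F(S, Z)^2 / 2, and the hypothesis bounds d_F(S, Z)^2.
   The set of squared singular values is nonempty because a real symmetric
   matrix has a real eigenvalue (the real or imaginary part of a complex
   eigenvector is a real one). *)

Lemma index_allpairs (T1 T2 : eqType) (s1 : seq T1) (s2 : seq T2) x1 x2 :
  x1 \in s1 -> x2 \in s2 ->
  index (x1, x2) [seq (a, b) | a <- s1, b <- s2] =
    (index x1 s1 * size s2 + index x2 s2)%N.
Proof.
move=> x1s1 x2s2; elim: s1 x1s1 => [//|a s1 IHs1] x1s1 /=.
rewrite index_cat; have [<-|ne_ax1] := eqVneq a x1.
  have -> : (a, x2) \in [seq (a, b) | b <- s2] by apply/mapP; exists x2.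
  by rewrite index_map // => u w [].
have -> : (x1, x2) \in [seq (a, b) | b <- s2] = false.
  by apply/negbTE/negP => /mapP [b _ [ex1 _]]; rewrite ex1 eqxx in ne_ax1.
rewrite in_cons eq_sym (negbTE ne_ax1) /= in x1s1.
by rewrite size_map IHs1 // mulSn addnA.
Qed.

Lemma nat_of_mxvec_index m n (i : 'I_m) (j : 'I_n) :
  mxvec_index i j = (i * n + j)%N :> nat.
Proof.
rewrite /mxvec_index /= /enum_rank enum_rank_in.unlock insubdK; last first.
  by rewrite unfold_in /= cardT index_mem mem_enum.
rewrite enumT unlock /= /prod_enum index_allpairs -?enumT ?mem_enum //.
by rewrite index_enum_ord size_enum_ord index_enum_ord.
Qed.

Lemma trZmat_mul (R : realType) n d p (S : 'M[R]_(n * d, p)) :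
  (Zmat R n d)^T *m S = \sum_i blk S i.
Proof.
apply/matrixP => a b; rewrite !mxE summxE.
have -> : \sum_i blk S i a b = \sum_i \sum_j ((j == a)%:R * S (mxvec_index i j) b).
  apply: eq_bigr => i _; rewrite (bigD1 a) //= eqxx mul1r big1 ?addr0 ?mxE //.
  by move=> j /negbTE ->; rewrite mul0r.
rewrite pair_bigA (reindex _ (curry_mxvec_bij _ _)); apply: eq_bigr => -[i j] _.
by rewrite !mxE nat_of_mxvec_index modnMDl modn_small.
Qed.

Section RowDot.
Variable R : realFieldType.

Definition dot m (u w : 'rV[R]_m) : R := (u *m w^T) 0 0.

Lemma dotE m (u w : 'rV[R]_m) : dot u w = \sum_j u 0 j * w 0 j.
Proof. by rewrite /dot !mxE; apply: eq_bigr => j _; rewrite mxE. Qed.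

Lemma dotC m (u w : 'rV[R]_m) : dot u w = dot w u.
Proof. by rewrite !dotE; apply: eq_bigr => j _; rewrite mulrC. Qed.

Lemma dotDl m (u v w : 'rV[R]_m) : dot (u + v) w = dot u w + dot v w.
Proof. by rewrite /dot mulmxDl mxE. Qed.

Lemma dotBl m (u v w : 'rV[R]_m) : dot (u - v) w = dot u w - dot v w.
Proof. by rewrite /dot mulmxBl !mxE. Qed.

Lemma dotZl m a (u w : 'rV[R]_m) : dot (a *: u) w = a * dot u w.
Proof. by rewrite /dot -scalemxAl mxE. Qed.

Lemma dotDr m (u v w : 'rV[R]_m) : dot w (u + v) = dot w u + dot w v.
Proof. by rewrite dotC dotDl !(dotC w). Qed.

Lemma dotBr m (u v w : 'rV[R]_m) : dot w (u - v) = dot w u - dot w v.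
Proof. by rewrite dotC dotBl !(dotC w). Qed.

Lemma dotZr m a (u w : 'rV[R]_m) : dot w (a *: u) = a * dot w u.
Proof. by rewrite dotC dotZl dotC. Qed.

Lemma dot_suml m (I : finType) (F : I -> 'rV[R]_m) w :
  dot (\sum_i F i) w = \sum_i dot (F i) w.
Proof. by rewrite /dot mulmx_suml summxE. Qed.

Lemma dot_mulmx m k (u : 'rV[R]_m) (B : 'M[R]_(m, k)) (w : 'rV[R]_k) :
  dot (u *m B) w = dot u (w *m B^T).
Proof. by rewrite /dot trmx_mul trmxK mulmxA. Qed.

Lemma dot_ge0 m (u : 'rV[R]_m) : 0 <= dot u u.
Proof. by rewrite dotE; apply: sumr_ge0 => j _; rewrite -expr2 sqr_ge0. Qed.

Lemma dot_eq0 m (u : 'rV[R]_m) : (dot u u == 0) = (u == 0).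
Proof.
apply/idP/eqP => [|->]; last by rewrite /dot mul0mx mxE.
rewrite dotE psumr_eq0 => [/allP u0|j _]; last by rewrite -expr2 sqr_ge0.
apply/rowP => j; apply/eqP; rewrite mxE -sqrf_eq0 expr2.
exact: u0 (mem_index_enum j).
Qed.

Lemma dot_gt0 m (u : 'rV[R]_m) : (0 < dot u u) = (u != 0).
Proof. by rewrite lt_def dot_ge0 dot_eq0 andbT. Qed.

Lemma dot_cauchy_schwarz m (u w : 'rV[R]_m) : dot u w ^+ 2 <= dot u u * dot w w.
Proof.
have [->|u_neq0] := eqVneq u 0; first by rewrite /dot !mul0mx !mxE expr0n mul0r.
have uu_gt0 : 0 < dot u u by rewrite dot_gt0.
have := dot_ge0 (dot u u *: w - dot u w *: u).
rewrite !(dotBl, dotBr, dotZl, dotZr) (dotC w u) => ge0.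
have : 0 <= dot u u * (dot u u * dot w w - dot u w ^+ 2) by nra.
by rewrite pmulr_rge0 // subr_ge0.
Qed.

Lemma dot_sum_le n m (a : 'I_n -> 'rV[R]_m) :
  dot (\sum_i a i) (\sum_i a i) <= n%:R * \sum_i dot (a i) (a i).
Proof.
rewrite (eq_bigr _ (fun i _ => dotE _ _)) dotE exchange_big mulr_sumr.
apply: ler_sum => j _; rewrite summxE -expr2.
pose one : 'rV[R]_n := const_mx 1; pose c : 'rV[R]_n := \row_i a i 0 j.
have -> : \sum_i a i 0 j = dot one c.
  by rewrite dotE; apply: eq_bigr => i _; rewrite !mxE mul1r.
have -> : n%:R = dot one one.
  by rewrite dotE; under eq_bigr do rewrite mxE mulr1; rewrite sumr_const card_ord.
have -> : \sum_i a i 0 j * a i 0 j = dot c c.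
  by rewrite dotE; apply: eq_bigr => i _; rewrite !mxE.
exact: dot_cauchy_schwarz.
Qed.

Lemma dot_mulmx_orth m k (v : 'rV[R]_m) (X : 'M[R]_(m, k)) :
  X *m X^T = 1%:M -> dot (v *m X) (v *m X) = dot v v.
Proof. by move=> orthX; rewrite dot_mulmx -mulmxA orthX mulmx1. Qed.

Lemma eigenvalue_gram m k (M : 'M[R]_(m, k)) l : eigenvalue (M *m M^T) l ->
  exists2 v : 'rV_m, 0 < dot v v & dot (v *m M) (v *m M) = l * dot v v.
Proof.
move=> /eigenvalueP [v vMM v_neq0]; exists v; first by rewrite dot_gt0.
by rewrite dot_mulmx -mulmxA vMM dotZr.
Qed.

Lemma eigenvalue_gram_ge0 m k (M : 'M[R]_(m, k)) l :
  eigenvalue (M *m M^T) l -> 0 <= l.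
Proof.
by case/eigenvalue_gram => v vv_gt0 vM; rewrite -(pmulr_lge0 _ vv_gt0) -vM dot_ge0.
Qed.
End RowDot.

Lemma dot_le_sqrt (R : rcfType) m (u w : 'rV[R]_m) :
  dot u w <= Num.sqrt (dot u u) * Num.sqrt (dot w w).
Proof.
rewrite -sqrtrM ?dot_ge0 //; apply: le_trans (ler_norm _) _.
by rewrite -sqrtr_sqr ler_wsqrtr // dot_cauchy_schwarz.
Qed.

Section SymmetricEigenvalue.
Variable R : rcfType.
Local Notation cRe := (@complex.Re R).
Local Notation cIm := (@complex.Im R).

Lemma cReM (a b : R[i]) : cRe (a * b) = cRe a * cRe b - cIm a * cIm b.
Proof. by case: a b => ? ? [? ?]. Qed.

Lemma cImM (a b : R[i]) : cIm (a * b) = cRe a * cIm b + cIm a * cRe b.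
Proof. by case: a b => ? ? [? ?]. Qed.

Lemma cRe_sum (I : finType) (F : I -> R[i]) : cRe (\sum_i F i) = \sum_i cRe (F i).
Proof. by apply: (big_morph cRe) => // [[? ?] [? ?]]. Qed.

Lemma cIm_sum (I : finType) (F : I -> R[i]) : cIm (\sum_i F i) = \sum_i cIm (F i).
Proof. by apply: (big_morph cIm) => // [[? ?] [? ?]]. Qed.

Lemma symmetric_eigenvalue d (A : 'M[R]_d) :
  (0 < d)%N -> A^T = A -> exists a, eigenvalue A a.
Proof.
move=> d_gt0 symA.
have [z /eigenvalueP [w wA w_neq0]] :=
  eigenvalue_closed (map_mx (real_complex R) A) d_gt0.
pose x := map_mx cRe w; pose y := map_mx cIm w.
have xA : x *m A = cRe z *: x - cIm z *: y.
  apply/rowP => j; move/rowP: wA => /(_ j); rewrite !mxE => /(congr1 cRe).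
  rewrite cRe_sum cReM => <-; apply: eq_bigr => k _.
  by rewrite !mxE cReM /= mulr0 subr0.
have yA : y *m A = cIm z *: x + cRe z *: y.
  apply/rowP => j; move/rowP: wA => /(_ j); rewrite !mxE => /(congr1 cIm).
  rewrite cIm_sum cImM addrC => <-; apply: eq_bigr => k _.
  by rewrite !mxE cImM /= mulr0 add0r.
have Imz_norm : cIm z * (dot x x + dot y y) = 0.
  have := dot_mulmx x A y; rewrite symA -/(dot x (y *m A)) xA yA.
  rewrite dotBl dotDr !dotZl !dotZr; lra.
have w0 : x = 0 -> y = 0 -> w = 0.
  move=> /rowP x0 /rowP y0; apply/rowP => j; move: (x0 j) (y0 j); rewrite !mxE.
  by case: (w 0 j) => a b /= -> ->.
have Imz0 : cIm z = 0.
  apply/eqP; move/eqP: Imz_norm; rewrite mulf_eq0 paddr_eq0 ?dot_ge0 // !dot_eq0.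
  by case/orP => // /andP [/eqP x0 /eqP y0]; rewrite (w0 x0 y0) eqxx in w_neq0.
exists (cRe z); apply/eigenvalueP; have [x0|x_neq0] := eqVneq x 0.
  exists y; first by rewrite yA Imz0 scale0r add0r.
  exact: contra_neq (w0 x0) w_neq0.
by exists x; rewrite // xA Imz0 scale0r subr0.
Qed.
End SymmetricEigenvalue.

Section OrthonormalBlocks.
Variable R : realType.

Lemma dot_mulmx_le_frob2 d p (v : 'rV[R]_d) (X : 'M[R]_(d, p)) :
  dot (v *m X) (v *m X) <= dot v v * frob2 X.
Proof.
rewrite dotE /frob2 exchange_big mulr_sumr; apply: ler_sum => j _.
pose c : 'rV[R]_d := \row_k X k j.
have -> : (v *m X) 0 j = dot v c by rewrite dotE mxE; apply: eq_bigr => k _; rewrite mxE.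
have -> : \sum_k X k j ^+ 2 = dot c c.
  by rewrite dotE; apply: eq_bigr => k _; rewrite mxE expr2.
by rewrite -expr2 dot_cauchy_schwarz.
Qed.

Variables (n d p : nat) (B : 'I_n -> 'M[R]_(d, p)).
Hypothesis orthB : forall i, B i *m (B i)^T = 1%:M.
Local Notation M := (\sum_i B i).

Lemma eigenvalue_sum_orth_le l : eigenvalue (M *m M^T) l -> l <= n%:R ^+ 2.
Proof.
case/eigenvalue_gram => v vv_gt0 vM; rewrite -(ler_pM2r vv_gt0) -vM.
have := dot_sum_le (fun i => v *m B i).
rewrite -mulmx_sumr (eq_bigr (fun=> dot v v)) => [|i _]; last exact: dot_mulmx_orth.
by rewrite sumr_const card_ord -[dot v v *+ n]mulr_natl mulrA -expr2.
Qed.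

Lemma eigenvalue_sum_orth_ge Q l : Q *m Q^T = 1%:M ->
  eigenvalue (M *m M^T) l -> n%:R - (\sum_i frob2 (B i - Q)) / 2 <= Num.sqrt l.
Proof.
move=> orthQ eig_l; have l_ge0 := eigenvalue_gram_ge0 eig_l.
have [v vv_gt0 vM] := eigenvalue_gram eig_l.
set N := dot v v in vv_gt0 vM.
have block_ge i : N - N * frob2 (B i - Q) / 2 <= dot (v *m B i) (v *m Q).
  have := dot_mulmx_le_frob2 v (B i - Q).
  rewrite mulmxBr !(dotBl, dotBr) !dot_mulmx_orth // (dotC (v *m Q)) -/N; lra.
have sum_ge : N * (n%:R - (\sum_i frob2 (B i - Q)) / 2) <= dot (v *m M) (v *m Q).
  rewrite mulmx_sumr dot_suml; apply: le_trans (ler_sum _ (fun i _ => block_ge i)).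
  rewrite sumrB sumr_const card_ord -mulr_suml -mulr_sumr -mulr_natr; lra.
have := le_trans sum_ge (dot_le_sqrt _ _).
rewrite vM dot_mulmx_orth // sqrtrM // -mulrA -expr2 sqr_sqrtr ?(ltW vv_gt0) //.
by rewrite [_ * N]mulrC ler_pM2l.
Qed.
End OrthonormalBlocks.

Lemma le_sqrt_inf (R : realType) (E : set R) x :
  E !=set0 -> (forall l, E l -> x <= Num.sqrt l) -> x <= Num.sqrt (inf E).
Proof.
move=> E0 le_xE; have [x_le0|x_gt0] := lerP x 0.
  exact: le_trans x_le0 (sqrtr_ge0 _).
rewrite -[x]ger0_norm ?(ltW x_gt0) // -sqrtr_sqr; apply: ler_wsqrtr.
apply: (@lb_le_inf R E) => // l El; have x_le := le_xE l El.
have l_gt0 : 0 < l by rewrite -sqrtr_gt0 (lt_le_trans x_gt0 x_le).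
rewrite -(sqr_sqrtr (ltW l_gt0)); nra.
Qed.

Lemma sqrt_le_dF (R : realType) n d p (S : 'M[R]_(n * d, p)) c : (d <= p)%N ->
  (forall Q, Q *m Q^T = 1%:M -> c <= \sum_i frob2 (blk S i - Q)) ->
  Num.sqrt c <= dF S.
Proof.
move=> le_dp c_le; apply: lb_le_inf => [|_ [Q [orthQ ->]]]; last first.
  exact: ler_wsqrtr (c_le Q orthQ).
exists (Num.sqrt (\sum_i frob2 (blk S i - pid_mx d))), (pid_mx d); split => //.
rewrite tr_pid_mx mul_pid_mx; apply/matrixP => i j.
by rewrite !mxE minnn (minn_idPr le_dp) ltn_ord andbT.
Qed.

Theorem lemma4 (R : realType) (n d p : nat) (hn : (1 <= n)%N) (hd : (1 <= d)%N)
  (hp : (d <= p)%N) (Delta : 'M[R]_(n * d, n * d)) (delta : R) (hdelta : 0 < delta)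
  (S : 'M[R]_(n * d, p))
  (hS : forall i : 'I_n, blk S i *m (blk S i)^T = 1%:M)
  (hdist : dF S <= delta * Num.sqrt (d%:R / n%:R) * opnorm Delta) :
  let M := (Zmat R n d)^T *m S in
  sigma_max M <= n%:R /\ sigma_min M <= sigma_max M /\
  n%:R - delta ^+ 2 * d%:R * opnorm Delta ^+ 2 / (2 * n%:R) <= sigma_min M.
Proof.
move=> M; have M_sum : M = \sum_i blk S i := trZmat_mul S.
set E := sq_singvals M.
have [l0 El0] : E !=set0 by apply: symmetric_eigenvalue hd _; rewrite trmx_mul trmxK.
have E_ge0 : lbound E 0 := fun l => @eigenvalue_gram_ge0 _ _ _ M l.
have E_le : ubound E (n%:R ^+ 2).
  by move=> l; rewrite /E /sq_singvals M_sum; apply: eigenvalue_sum_orth_le.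
split.
  apply: le_trans (ler_wsqrtr (ge_sup (ex_intro _ l0 El0) E_le)) _.
  by rewrite sqrtr_sqr normr_nat.
split.
  apply/ler_wsqrtr/(le_trans (ge_inf (ex_intro _ 0 E_ge0) El0)).
  exact: (@ub_le_sup _ E (ex_intro _ _ E_le) l0 El0).
set b := delta * Num.sqrt (d%:R / n%:R) * opnorm Delta in hdist.
have b_ge0 : 0 <= b by rewrite !mulr_ge0 ?sqrtr_ge0 ?ltW.
have -> : delta ^+ 2 * d%:R * opnorm Delta ^+ 2 / (2 * n%:R) = b ^+ 2 / 2.
  rewrite /b !exprMn (@sqr_sqrtr _ (d%:R / n%:R)) ?divr_ge0 //.
  by field; rewrite pnatr_eq0 -lt0n.
have lower Q : Q *m Q^T = 1%:M ->
    2 * (n%:R - sigma_min M) <= \sum_i frob2 (blk S i - Q).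
  move=> orthQ; suff : n%:R - (\sum_i frob2 (blk S i - Q)) / 2 <= sigma_min M by lra.
  apply: le_sqrt_inf => [|l]; first by exists l0.
  rewrite /E /sq_singvals M_sum; exact: eigenvalue_sum_orth_ge.
suff : 2 * (n%:R - sigma_min M) <= b ^+ 2 by lra.
rewrite -ler_sqrt ?sqr_ge0 // sqrtr_sqr ger0_norm //.
exact: le_trans (sqrt_le_dF hp lower) hdist.
Qed.
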